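(* For every $\beta>0$, every $\lambda\in(0,n)$ with $n\ge\lambda\ge\frac{16}{9}\log\frac2\beta$, every $r\in\mathbb{N}$ and every $X=(x_1,\dots,x_n)\in[0,1]^n$, \[ \Pr\left[\left|P^{\mathbb{R}}_{n,\lambda,r}(X)-\sum_{i=1}^n x_i\right|\ge\frac{\sqrt2}{r}\sqrt{n\log\frac2\beta}+\frac{n}{n-\lambda}\sqrt{2\frac{\lambda}{r}\log\frac2\beta}\right]<2\beta. \]
   Context: Bit randomizer $R^{0/1}_{n,\lambda}(b)$, $b\in\{0,1\}$, $\lambda\in(0,n)$: draw $\mathbf{b}\sim\mathrm{Ber}(\lambda/n)$; output $b$ if $\mathbf{b}=0$, a fresh $\mathrm{Ber}(1/2)$ bit if $\mathbf{b}=1$. Encoder $E_r(x)$, $x\in[0,1]$: $\mu=\lceil xr\rceil$, $p=xr-\mu+1$, and for $j=1,\dots,r$: $b_j=1$ if $j<\mu$, $b_j\sim\mathrm{Ber}(p)$ if $j=\mu$, $b_j=0$ if $j>\mu$. Real-sum protocol $P^{\mathbb{R}}_{n,\lambda,r}$: user $i$ computes $(b_{i,1},\dots,b_{i,r})=E_r(x_i)$ and sends the $r$ messages $y_{i,j}=R^{0/1}_{n,\lambda}(b_{i,j})$ (all randomness independent); the $nr$ messages are shuffled uniformly at random; the analyzer outputs $\frac1r\cdot\frac{n}{n-\lambda}\left(\sum_j\sum_i y_{i,j}-\frac{\lambda r}{2}\right)$. $\log$ is the natural logarithm. *)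

From HB Require Import structures.
From mathcomp Require Import all_boot all_order all_algebra all_fingroup.
From mathcomp Require Import all_classical all_reals all_analysis.
Set Implicit Arguments. Unset Strict Implicit. Unset Printing Implicit Defensive.
Import Order.TTheory GRing.Theory Num.Theory.
Local Open Scope ring_scope.

Section Protocol.
Variables (R : realType) (n r : nat) (lam : R) (x : 'I_n -> R).

Definition idx : finType := (ordinal n * ordinal r)%type.

Definition ber (q : R) (b : bool) : R := if b then q else 1 - q.

Definition enc_mu (xi : R) : int := Num.ceil (xi * r%:R).
Definition enc_p (xi : R) : R := xi * r%:R - (enc_mu xi)%:~R + 1.

(* randomness of one (user i, message j): (encoder coin e, randomizer
   selector bb ~ Ber(lam/n), fresh bit c ~ Ber(1/2)) *)
Definition coins := {ffun idx -> bool * bool * bool}.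
Definition outcome := (coins * {perm idx})%type.

(* encoder bit b_{i,j}; j : 'I_r is the (j+1)-th bit, 1-indexed *)
Definition enc_bit (xi : R) (j : 'I_r) (e : bool) : bool :=
  let mu := enc_mu xi in
  if (j.+1%:Z < mu)%R then true
  else if (j.+1%:Z == mu) then e
  else false.

Definition message (w : coins) (ij : idx) : bool :=
  let: (e, bb, c) := w ij in
  if bb then c else enc_bit (x ij.1) ij.2 e.

Definition coin_weight (ij : idx) (t : bool * bool * bool) : R :=
  let: (e, bb, c) := t in
  (if (ij.2.+1%:Z == enc_mu (x ij.1)) then ber (enc_p (x ij.1)) e
   else ber (1/2) e) (* coin unused when j <> mu *)
  * ber (lam / n%:R) bb * ber (1/2) c.

Definition weight (o : outcome) : R :=
  (\prod_(ij : idx) coin_weight ij (o.1 ij)) / ((n * r)`!)%:R.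

(* shuffled multiset of messages, as the sequence the analyzer receives *)
Definition shuffled (o : outcome) : seq bool :=
  [seq message o.1 (o.2 k) | k <- enum idx].

Definition analyzer (ys : seq bool) : R :=
  (r%:R)^-1 * (n%:R / (n%:R - lam)) *
  ((\sum_(y <- ys) (y : nat)%:R) - lam * r%:R / 2).

Definition PR_output (o : outcome) : R := analyzer (shuffled o).

Definition prob (E : R -> bool) : R :=
  \sum_(o : outcome | E (PR_output o)) weight o.

End Protocol.

(* Dropping the shuffle (the analyzer only sees the sum of the messages), the
   outcome is a product of independent coins, and with rho = lam / n the error
   of the output is ((1 - rho) \sum U + \sum W) / (r (1 - rho)), where
   U_ij = b_ij - E b_ij is the rounding noise of the encoder and
   W_ij = y_ij - E [y_ij | b_ij] the noise of the randomizer.  Each user has at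
   most one nonzero U_ij, a centred Bernoulli (p) variable, and each W_ij is a
   centred Bernoulli (rho / 2) variable up to sign.  With
   psi z = e^z - 1 - z, the moment generating function of a centred
   Bernoulli (p) variable is at most exp (min(p, 1 - p) max (psi z, psi (-z))),
   and psi z < z^2 for 0 < |z| <= 11/10.  The Chernoff bound at the optimal
   parameter then gives each of the four one-sided tails a probability below
   exp (- ln (2 / beta)) = beta / 2; the hypothesis lam >= 16/9 ln (2 / beta)
   keeps the optimal parameter in the range where psi z < z^2. *)

From HB Require Import structures.
From mathcomp Require Import all_boot all_order all_algebra all_fingroup.
From mathcomp Require Import all_classical all_reals all_analysis.
From mathcomp Require Import ring lra.
Import Order.TTheory GRing.Theory Num.Theory.
Local Open Scope ring_scope.

Section ExpRemainder.
Context {R : realType}.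
Implicit Types x : R.

(* The Taylor tail of expR beyond degree k + 1 is dominated by a geometric
   series of ratio x / 3. *)
Lemma series_exp_coeff_le x k : 0 <= x < 3 ->
  series (exp_coeff x) k.+2 + x ^+ k.+2 / k.+2`!%:R / (1 - x / 3)
  <= 1 + x + x ^+ 2 / 2 / (1 - x / 3).
Proof.
move=> /andP[x0 x3]; have d0 : 0 < 1 - x / 3 by lra.
elim: k => [|k IH].
  rewrite /series /= !big_nat_recr //= big_geq // /exp_coeff /= expr0 expr1.
  by rewrite !factS fact0 /=; lra.
apply: le_trans IH.
rewrite /series /= [X in X + _ <= _]big_nat_recr //= -addrA lerD2l /exp_coeff /=.
set T := x ^+ k.+2 / k.+2`!%:R.
have -> : x ^+ k.+3 / k.+3`!%:R = T * (x / k.+3%:R).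
  by rewrite /T factS natrM exprS invfM; ring.
have T0 : 0 <= T by rewrite divr_ge0 // exprn_ge0.
clearbody T.
have ratio : x / k.+3%:R <= x / 3.
  by rewrite ler_wpM2l // lef_pV2 ?posrE // (natrD _ 3 k) lerDl.
have -> : T + T * (x / k.+3%:R) / (1 - x / 3) = T * (1 - x / 3 + x / k.+3%:R) / (1 - x / 3).
  by field; rewrite subr_eq0 (gt_eqF x3) -(natrD _ 3 k) pnatr_eq0.
by rewrite ler_pM2r ?invr_gt0 // ler_piMr // -addrA gerDl addrC subr_le0.
Qed.

Lemma expR_le_quad x : 0 <= x < 3 -> expR x <= 1 + x + x ^+ 2 / 2 / (1 - x / 3).
Proof.
move=> x03; apply: limr_le; first exact: is_cvg_series_exp_coeff.
near=> k; have [m ->] : exists m, k = m.+2.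
  by exists k.-2; rewrite -subn2 -addn2 subnK //; near: k; exists 2%N.
have /andP[x0 x3] := x03.
have rem0 : 0 <= x ^+ m.+2 / m.+2`!%:R / (1 - x / 3).
  by rewrite !divr_ge0 ?exprn_ge0 //; lra.
by have := series_exp_coeff_le x m x03; lra.
Unshelve. all: by end_near.
Qed.

Definition expRrem x := expR x - 1 - x.
Definition expRrem_max x := Num.max (expRrem x) (expRrem (- x)).

Lemma expRrem_ge0 x : 0 <= expRrem x.
Proof. by have := expR_ge1Dx x; rewrite /expRrem; lra. Qed.

Lemma expRrem_lt_sqr x : 0 < x <= 11 / 10 -> expRrem x < x ^+ 2.
Proof.
move=> /andP[x0 x1]; have d0 : 0 < 1 - x / 3 by lra.
have quad_lt : x ^+ 2 / 2 / (1 - x / 3) < x ^+ 2.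
  have x2_gt0 : 0 < x ^+ 2 by rewrite exprn_gt0.
  by rewrite !ltr_pdivrMr //; nra.
have : 0 <= x < 3 by apply/andP; split; lra.
by move/expR_le_quad; rewrite /expRrem; lra.
Qed.

Lemma expRremN_lt_sqr x : 0 < x -> expRrem (- x) < x ^+ 2.
Proof.
move=> x0; have x1 : 0 < 1 + x by lra.
have : expR (- x) <= (1 + x)^-1.
  by rewrite expRN lef_pV2 ?posrE ?expR_gt0 // expR_ge1Dx.
have -> : (1 + x)^-1 = 1 - x + x ^+ 2 / (1 + x) by field; rewrite lt0r_neq0.
have : x ^+ 2 / (1 + x) < x ^+ 2.
  by rewrite ltr_pdivrMr // ltr_pMr ?exprn_gt0 //; lra.
by rewrite /expRrem; lra.
Qed.

Lemma expRrem_maxN x : expRrem_max (- x) = expRrem_max x.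
Proof. by rewrite /expRrem_max opprK maxC. Qed.

Lemma expRrem_max_ge0 x : 0 <= expRrem_max x.
Proof. by rewrite le_max expRrem_ge0. Qed.

Lemma expRrem_max_lt_sqr x : x != 0 -> `|x| <= 11 / 10 -> expRrem_max x < x ^+ 2.
Proof.
wlog x0 : x / 0 < x => [Hpos x_neq0|_].
  have [x0|x_le0] := ltP 0 x; first exact: Hpos.
  rewrite -expRrem_maxN -sqrrN -normrN; apply: Hpos; rewrite ?oppr_eq0 //.
  by rewrite oppr_gt0 lt_neqAle x_neq0 x_le0.
rewrite gtr0_norm // => x_le.
have x_rng : 0 < x <= 11 / 10 by rewrite x0 x_le.
by rewrite gt_max (expRremN_lt_sqr x x0) (expRrem_lt_sqr x x_rng).
Qed.

(* The Chernoff exponent is optimised at s = 2 L / t; the condition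
   L <= 9 N / 16 keeps s ^+ 2 = 2 L / N <= 9 / 8, where expRrem_max s < s ^+ 2. *)
Lemma subgaussian_tail (P N L t : R) :
  (forall s, 0 <= s -> P <= 2 * expR (N / 2 * expRrem_max s - s * t)) ->
  0 < N -> 0 < L -> L <= 9 / 16 * N -> 0 <= t -> t ^+ 2 = 2 * N * L ->
  P < 2 * expR (- L).
Proof.
move=> tail N0 L0 LN t0 t2.
have {}t0 : 0 < t.
  have t2_gt0 : 0 < t ^+ 2 by rewrite t2 !mulr_gt0.
  by rewrite lt0r t0 andbT; apply: contraTneq t2_gt0 => ->; rewrite expr0n ltxx.
pose s := 2 * L / t.
have s0 : 0 < s by rewrite divr_gt0 ?mulr_gt0.
have st : s * t = 2 * L by rewrite divfK ?lt0r_neq0.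
have s2 : s ^+ 2 = 2 * L / N.
  by rewrite expr_div_n t2; field; rewrite !lt0r_neq0.
have s_le : `|s| <= 11 / 10.
  rewrite gtr0_norm //; have : s ^+ 2 <= 9 / 8 by rewrite s2 ler_pdivrMr //; lra.
  by nra.
have := expRrem_max_lt_sqr s (lt0r_neq0 s0) s_le; rewrite s2 => Ms.
apply: le_lt_trans (tail s (ltW s0)) _; rewrite ltr_pM2l // ltr_expR st.
have : N / 2 * expRrem_max s < N / 2 * (2 * L / N) by rewrite ltr_pM2l ?divr_gt0.
have -> : N / 2 * (2 * L / N) = L by field; rewrite lt0r_neq0.
lra.
Qed.

End ExpRemainder.

Section Bernoulli.
Context {R : realType}.
Implicit Types p q z : R.

Lemma sum_ber p : \sum_b ber p b = 1.
Proof. by rewrite big_bool /ber /= addrC subrK. Qed.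

Lemma ber_ge0 p b : 0 <= p <= 1 -> 0 <= ber p b.
Proof. by case/andP; case: b; rewrite /ber //= subr_ge0. Qed.

Definition ber_mgf p z := \sum_b ber p b * expR (z * ((b : nat)%:R - p)).

Lemma ber_mgfE p z : ber_mgf p z = p * expR (z * (1 - p)) + (1 - p) * expR (- (z * p)).
Proof. by rewrite /ber_mgf big_bool /ber /= mulr1n mulr0n sub0r mulrN. Qed.

Lemma ber_mgfC p z : ber_mgf (1 - p) (- z) = ber_mgf p z.
Proof.
rewrite !ber_mgfE addrC; congr (_ * expR _ + _ * expR _); ring.
Qed.

Lemma ber_mgf_le p z : 0 <= p -> ber_mgf p z <= expR (p * expRrem z).
Proof.
move=> p0; have -> : ber_mgf p z = expR (- (z * p)) * (1 + p * (expR z - 1)).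
  by rewrite ber_mgfE mulrBr mulr1 expRD; ring.
have -> : p * expRrem z = - (z * p) + p * (expR z - 1) by rewrite /expRrem; ring.
by rewrite expRD ler_pM2l ?expR_gt0 // expR_ge1Dx.
Qed.

Lemma ber_mgf_le_max p z : 0 <= p <= 1 ->
  ber_mgf p z <= expR (Num.min p (1 - p) * expRrem_max z).
Proof.
move=> /andP[p0 p1]; have [pp|pp] := lerP p (1 - p).
  apply: le_trans (ber_mgf_le p z p0) _.
  by rewrite ler_expR ler_wpM2l // le_max lexx.
rewrite -ber_mgfC; apply: le_trans (ber_mgf_le _ _ _) _; first lra.
by rewrite ler_expR ler_wpM2l ?subr_ge0 // le_max lexx orbT.
Qed.

Lemma ber_mgf_le_half p z : 0 <= p <= 1 -> ber_mgf p z <= expR (expRrem_max z / 2).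
Proof.
move=> p01; apply: le_trans (ber_mgf_le_max p z p01) _.
rewrite ler_expR mulrC ler_wpM2l ?expRrem_max_ge0 // ge_min.
by case/andP: p01 => p0 p1; case: (lerP p (1 / 2)) => //= ?; lra.
Qed.

Lemma randomizer_mgf q z (b : bool) :
  \sum_bb \sum_c ber q bb * ber (1 / 2) c *
    expR (z * (((if bb then c else b) : nat)%:R - ((1 - q) * (b : nat)%:R + q / 2)))
  = ber_mgf ((1 - q) * (b : nat)%:R + q / 2) z.
Proof.
rewrite ber_mgfE !big_bool /ber /=.
by case: b; rewrite /= ?mulr1n ?mulr0n ?sub0r ?mulrN; ring.
Qed.

Lemma randomizer_mgf_le q z (b : bool) : 0 <= q <= 1 ->
  \sum_bb \sum_c ber q bb * ber (1 / 2) c *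
    expR (z * (((if bb then c else b) : nat)%:R - ((1 - q) * (b : nat)%:R + q / 2)))
  <= expR (q / 2 * expRrem_max z).
Proof.
move=> /andP[q0 q1]; rewrite randomizer_mgf.
apply: le_trans (ber_mgf_le_max _ z _) _.
  by case: b; rewrite /= ?mulr1n ?mulr0n; apply/andP; split; lra.
rewrite ler_expR ler_wpM2r ?expRrem_max_ge0 // ge_min.
by case: b; rewrite /= ?mulr1n ?mulr0n; apply/orP; [right|left]; lra.
Qed.

End Bernoulli.

Lemma sum_pair {V : nmodType} {A B : finType} (G : A * B -> V) :
  \sum_p G p = \sum_a \sum_b G (a, b).
Proof. by rewrite pair_big; apply: eq_bigr => -[]. Qed.

Section ProductMass.
Context {R : realType} {I T : finType} (mu : I -> T -> R).
Hypothesis mu_ge0 : forall i u, 0 <= mu i u.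

Definition pmass (E : pred {ffun I -> T}) : R := \sum_(w | E w) \prod_i mu i (w i).

Lemma pmass_weight_ge0 (w : {ffun I -> T}) : 0 <= \prod_i mu i (w i).
Proof. by apply: prodr_ge0 => i _; apply: mu_ge0. Qed.

Lemma pmass_le_union (E F G : pred {ffun I -> T}) :
  (forall w, E w -> F w || G w) -> pmass E <= pmass F + pmass G.
Proof.
move=> EFG; rewrite /pmass (big_mkcond F) (big_mkcond G) (big_mkcond E) -big_split /=.
apply: ler_sum => w _; have := pmass_weight_ge0 w.
by case: (E w) (EFG w) => [/(_ isT)|_]; case: (F w); case: (G w) => //=; lra.
Qed.

Lemma pmass_le1 E : (forall i, \sum_u mu i u = 1) -> pmass E <= 1.
Proof.
move=> mu1; apply: (@le_trans _ _ (\sum_(w : {ffun I -> T}) \prod_i mu i (w i))).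
  by rewrite [leRHS](bigID E) lerDl sumr_ge0 // => w _; apply: pmass_weight_ge0.
by rewrite -bigA_distr_bigA big1.
Qed.

Lemma pmass_chernoff (g : I -> T -> R) (v : I -> R) (s t : R) : 0 <= s ->
  (forall i, \sum_u mu i u * expR (s * g i u) <= expR (v i)) ->
  pmass [pred w : {ffun I -> T} | t <= \sum_i g i (w i)] <= expR (\sum_i v i - s * t).
Proof.
move=> s0 mgf; rewrite /pmass.
apply: (@le_trans _ _
  (\sum_(w : {ffun I -> T}) \prod_i mu i (w i) * expR (s * (\sum_i g i (w i) - t)))).
  rewrite [leRHS](bigID [pred w : {ffun I -> T} | t <= \sum_i g i (w i)]) /= -[leLHS]addr0.
  apply: lerD; last by apply: sumr_ge0 => w _; rewrite mulr_ge0 ?expR_ge0 ?pmass_weight_ge0.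
  apply: ler_sum => w tw; rewrite ler_peMr ?pmass_weight_ge0 //.
  by rewrite -expR0 ler_expR mulr_ge0 // subr_ge0.
under eq_bigr => w _ do rewrite mulrBr expRD mulr_sumr expR_sum mulrA -big_split /=.
rewrite -mulr_suml -(bigA_distr_bigA (fun i u => mu i u * expR (s * g i u))) /=.
rewrite expRD ler_wpM2r ?expR_ge0 // expR_sum.
apply: ler_prod => i _; rewrite mgf andbT.
by apply: sumr_ge0 => u _; rewrite mulr_ge0 ?expR_ge0.
Qed.

Lemma pmass_abs_chernoff (g : I -> T -> R) (v : I -> R) (s t : R) : 0 <= s ->
  (forall i, \sum_u mu i u * expR (s * g i u) <= expR (v i)) ->
  (forall i, \sum_u mu i u * expR (- s * g i u) <= expR (v i)) ->
  pmass [pred w : {ffun I -> T} | t <= `|\sum_i g i (w i)|] <= 2 * expR (\sum_i v i - s * t).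
Proof.
move=> s0 mgf mgfN; rewrite mulr2n mulrDl mul1r.
have neg_sum w : - \sum_i g i (w i) = \sum_i - g i (w i) by rewrite sumrN.
apply: le_trans (pmass_le_union _ [pred w : {ffun I -> T} | t <= \sum_i g i (w i)]
                                  [pred w : {ffun I -> T} | t <= \sum_i - g i (w i)] _) _.
  by move=> w; rewrite /= -neg_sum ler_normr.
apply: lerD; first exact: pmass_chernoff.
apply: (pmass_chernoff (fun i u => - g i u)) => // i.
by under eq_bigr => u _ do rewrite mulrN -mulNr.
Qed.

End ProductMass.

Section Encoder.
Context {R : realType} (r : nat).
Implicit Types xi : R.

Lemma sum_step (k : nat) (a : R) : (0 < k <= r)%N ->
  \sum_(j < r) (if (j.+1 < k)%N then 1 else if j.+1 == k then a else 0) = k.-1%:R + a.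
Proof.
case: k => // k /andP[_ kr] /=.
pose F j : R := if (j.+1 < k.+1)%N then 1 else if j.+1 == k.+1 then a else 0.
rewrite -(big_mkord xpredT F) (big_cat_nat (n := k)) //=; last exact: ltnW.
have head : \sum_(0 <= j < k) F j = k%:R.
  rewrite (eq_big_nat _ _ (F2 := fun=> 1)) ?sumr_const_nat ?subn0 // => j /andP[_ jk].
  by rewrite /F ltnS jk.
have tail : \sum_(k.+1 <= j < r) F j = 0.
  rewrite big_nat_cond big1 // => j /andP[/andP[kj _] _].
  by rewrite /F ltnS ltnNge (ltnW kj) /= eqSS gtn_eqF.
by rewrite head [\sum_(k <= i < r) _]big_ltn // tail /F ltnn eqxx addr0.
Qed.

Lemma sum_if_succ_eq_le (k : int) (a : R) : 0 <= a ->
  \sum_(j < r) (if j.+1%:Z == k then a else 0) <= a.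
Proof.
move=> a0; rewrite -big_mkcond /=.
have [j0 /eqP j0k|none] := pickP [pred j : 'I_r | j.+1%:Z == k]; last by rewrite big_pred0.
by rewrite (big_pred1 j0) // => j; rewrite /= -j0k eqz_nat eqSS.
Qed.

Definition enc_mean xi (j : 'I_r) : R :=
  if j.+1%:Z < enc_mu r xi then 1 else if j.+1%:Z == enc_mu r xi then enc_p r xi else 0.

Lemma enc_p_ge0_le1 xi : 0 <= enc_p r xi <= 1.
Proof.
have /andP[] := ceil_itv (xi * r%:R); rewrite /enc_p /enc_mu intrD /=.
by move=> lo hi; apply/andP; split; lra.
Qed.

Lemma sum_enc_mean xi : 0 <= xi <= 1 -> \sum_j enc_mean xi j = xi * r%:R.
Proof.
move=> /andP[xi0 xi1]; have xr0 : 0 <= xi * r%:R by rewrite mulr_ge0.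
have xr_le : xi * r%:R <= r%:R by rewrite ler_piMl.
have mu0 : 0 <= enc_mu r xi by rewrite ceil_ge0; lra.
have [k mu_k] : exists k : nat, enc_mu r xi = k%:Z by exists `|enc_mu r xi|%N; rewrite gez0_abs.
have := ceil_itv (xi * r%:R); rewrite -/(enc_mu r xi) mu_k => /andP[lo hi].
rewrite /enc_mean mu_k.
under eq_bigr => j _ do rewrite ltz_nat eqz_nat.
case: k mu_k lo hi => [|k] mu_k lo hi.
  by rewrite big1 //; move: hi; rewrite mulr0z => hi; lra.
have kr : (k < r)%N.
  rewrite -(ltr_nat R); apply: lt_le_trans xr_le.
  by move: lo; rewrite -addn1 PoszD addrK.
by rewrite sum_step ?kr // /enc_p mu_k -[k.+1%:~R]/(k.+1)%:R -natr1; ring.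
Qed.

End Encoder.

Section Protocol.
Context {R : realType} (n r : nat) (lam : R) (x : 'I_n -> R).

Local Notation rho := (lam / n%:R).
Local Notation cw := (coin_weight lam x).

Definition coin_output (w : coins n r) : R :=
  analyzer n r lam [seq message x w k | k <- enum (idx n r)].

Lemma PR_outputE w (s : {perm idx n r}) : PR_output lam x (w, s) = coin_output w.
Proof.
rewrite /PR_output /coin_output /analyzer /shuffled !big_map.
congr (_ * (_ - _)); symmetry; exact: (reindex_inj (@perm_inj _ s)).
Qed.

Lemma card_perm_idx : #|{perm idx n r}| = (n * r)`!.
Proof.
rewrite (eq_card (B := perm_on [set: idx n r])) ?card_perm ?cardsT ?card_prod ?card_ord //.
by move=> s; rewrite inE unfold_in /perm_on /=; apply/esym/fintype.subsetP => i; rewrite inE.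
Qed.

Lemma prob_coins (E : pred R) :
  prob r lam x E = pmass cw [pred w : coins n r | E (coin_output w)].
Proof.
rewrite /prob /pmass big_mkcond [RHS]big_mkcond /=.
rewrite -(pair_big xpredT xpredT
  (fun w s => if E (PR_output lam x (w, s)) then weight lam x (w, s) else 0)) /=.
apply: eq_bigr => w _; under eq_bigr => s _ do rewrite PR_outputE.
case: (E _); last by rewrite big1.
by rewrite /weight /= sumr_const card_perm_idx -[(_ / _) *+ _]mulr_natr divfK.
Qed.

Definition coin_bias (ij : idx n r) : R :=
  if ij.2.+1%:Z == enc_mu r (x ij.1) then enc_p r (x ij.1) else 1 / 2.

Lemma coin_weightE ij e bb c :
  cw ij (e, bb, c) = ber (coin_bias ij) e * ber rho bb * ber (1 / 2) c.
Proof. by rewrite /coin_weight /coin_bias; case: ifP. Qed.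

Lemma sum_coin_weight ij (F : bool * bool * bool -> R) :
  \sum_t cw ij t * F t =
  \sum_e ber (coin_bias ij) e * \sum_bb \sum_c ber rho bb * ber (1 / 2) c * F (e, bb, c).
Proof.
rewrite !sum_pair; apply: eq_bigr => e _; rewrite mulr_sumr.
apply: eq_bigr => bb _; rewrite mulr_sumr; apply: eq_bigr => c _.
by rewrite coin_weightE !mulrA.
Qed.

Lemma sum_coin_weight_fst ij (F : bool -> R) :
  \sum_t cw ij t * F t.1.1 = \sum_e ber (coin_bias ij) e * F e.
Proof.
rewrite sum_coin_weight; apply: eq_bigr => e _; congr (_ * _).
by rewrite /= !big_bool /ber /=; ring.
Qed.

Hypothesis x01 : forall i, 0 <= x i <= 1.
Hypothesis lam_gt0 : 0 < lam.
Hypothesis lam_lt_n : lam < n%:R.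

Lemma n_gt0 : (0 < n)%N.
Proof. by rewrite -(ltr0n R); apply: lt_trans lam_lt_n. Qed.

Lemma rho_ge0_le1 : 0 <= rho <= 1.
Proof.
have n_pos : 0 < n%:R :> R by rewrite ltr0n n_gt0.
apply/andP; split; first by rewrite divr_ge0 ?ltW.
by rewrite ler_pdivrMr // mul1r ltW.
Qed.

Lemma coin_bias_ge0_le1 ij : 0 <= coin_bias ij <= 1.
Proof.
by rewrite /coin_bias; case: ifP => _; rewrite ?enc_p_ge0_le1 //; apply/andP; split; lra.
Qed.

Lemma coin_weight_ge0 (ij : idx n r) t : 0 <= cw ij t.
Proof.
have half01 : 0 <= (1 / 2 : R) <= 1 by apply/andP; split; lra.
case: t => [[e bb] c].
by rewrite coin_weightE !mulr_ge0 ?ber_ge0 ?coin_bias_ge0_le1 ?rho_ge0_le1.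
Qed.

Lemma sum_coin_weight1 (ij : idx n r) : \sum_t cw ij t = 1.
Proof.
under eq_bigr => t _ do rewrite -[cw ij t]mulr1.
by rewrite sum_coin_weight !big_bool /ber /=; ring.
Qed.

Definition encoder_noise (ij : idx n r) (t : bool * bool * bool) : R :=
  (enc_bit (x ij.1) ij.2 t.1.1 : nat)%:R - enc_mean r (x ij.1) ij.2.

Definition randomizer_noise (ij : idx n r) (t : bool * bool * bool) : R :=
  let: (e, bb, c) := t in let b := enc_bit (x ij.1) ij.2 e in
  ((if bb then c else b) : nat)%:R - ((1 - rho) * (b : nat)%:R + rho / 2).

Lemma message_decomp w ij : (message x w ij : nat)%:R =
  (1 - rho) * encoder_noise ij (w ij) + randomizer_noise ij (w ij)
  + (1 - rho) * enc_mean r (x ij.1) ij.2 + rho / 2.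
Proof.
by rewrite /message /encoder_noise /randomizer_noise; case: (w ij) => [[e bb] c] /=; ring.
Qed.

Hypothesis r_gt0 : (0 < r)%N.

Lemma coin_output_error w : coin_output w - \sum_i x i =
  ((1 - rho) * \sum_ij encoder_noise ij (w ij) + \sum_ij randomizer_noise ij (w ij))
  / (r%:R * (1 - rho)).
Proof.
have sum_enum (F : idx n r -> R) : \sum_(k <- enum (idx n r)) F k = \sum_k F k.
  by rewrite big_enum.
set U := \sum_ij encoder_noise ij (w ij); set W := \sum_ij randomizer_noise ij (w ij).
rewrite /coin_output /analyzer big_map sum_enum.
under eq_bigr => ij _ do rewrite message_decomp.
rewrite !big_split /= -!mulr_sumr sumr_const card_prod !card_ord.
rewrite (sum_pair (fun ij : idx n r => enc_mean r (x ij.1) ij.2)) /=.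
rewrite (eq_bigr (fun i => x i * r%:R)) => [|i _]; last exact: sum_enc_mean.
rewrite -mulr_suml -/U -/W -[2^-1 *+ _]mulr_natr natrM.
have n0 : n%:R != 0 :> R by rewrite pnatr_eq0 -lt0n n_gt0.
have r0 : r%:R != 0 :> R by rewrite pnatr_eq0 -lt0n.
have nlam : n%:R - lam != 0 by rewrite subr_eq0 gt_eqF.
by field; rewrite n0 r0 nlam.
Qed.

Lemma error_split w (T1 T2 : R) : T1 + T2 <= `|coin_output w - \sum_i x i| ->
  (T1 * r%:R <= `|\sum_ij encoder_noise ij (w ij)|) ||
  (T2 * (r%:R * (1 - rho)) <= `|\sum_ij randomizer_noise ij (w ij)|).
Proof.
have c0 : 0 < 1 - rho by rewrite subr_gt0 ltr_pdivrMr ?mul1r // ltr0n n_gt0.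
have rc0 : 0 < r%:R * (1 - rho) by rewrite mulr_gt0 ?ltr0n.
rewrite coin_output_error normf_div (gtr0_norm rc0) ler_pdivlMr //.
set U := \sum_ij _; set W := \sum_ij _ => err.
have tri : `|(1 - rho) * U + W| <= (1 - rho) * `|U| + `|W|.
  by rewrite (le_trans (ler_normD _ _)) // normrM gtr0_norm.
have [//|U_small] := lerP (T1 * r%:R) `|U|.
have : (1 - rho) * `|U| < (1 - rho) * (T1 * r%:R) by rewrite ltr_pM2l.
lra.
Qed.

Lemma encoder_noise_mgf (ij : idx n r) z :
  \sum_t cw ij t * expR (z * encoder_noise ij t) <=
  expR (if ij.2.+1%:Z == enc_mu r (x ij.1) then expRrem_max z / 2 else 0).
Proof.
rewrite (sum_coin_weight_fst ij (fun e => expR (z * ((enc_bit (x ij.1) ij.2 e : nat)%:R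
                                                     - enc_mean r (x ij.1) ij.2)))).
rewrite /coin_bias /enc_bit /enc_mean /=; case: ltgtP => _.
- by rewrite mulr1n subrr mulr0 -mulr_suml sum_ber mul1r.
- by rewrite mulr0n subrr mulr0 -mulr_suml sum_ber mul1r.
- exact: ber_mgf_le_half (enc_p_ge0_le1 _ _).
Qed.

Lemma randomizer_noise_mgf (ij : idx n r) z :
  \sum_t cw ij t * expR (z * randomizer_noise ij t) <= expR (rho / 2 * expRrem_max z).
Proof.
rewrite sum_coin_weight.
apply: le_trans (_ : _ <= \sum_e ber (coin_bias ij) e * expR (rho / 2 * expRrem_max z)) _.
  apply: ler_sum => e _; rewrite ler_wpM2l ?ber_ge0 ?coin_bias_ge0_le1 //.
  exact: randomizer_mgf_le rho_ge0_le1.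
by rewrite -mulr_suml sum_ber mul1r.
Qed.

Lemma encoder_noise_chernoff s t : 0 <= s ->
  pmass cw [pred w : coins n r | t <= `|\sum_ij encoder_noise ij (w ij)|]
  <= 2 * expR (n%:R / 2 * expRrem_max s - s * t).
Proof.
move=> s0; pose v (ij : idx n r) :=
  if ij.2.+1%:Z == enc_mu r (x ij.1) then expRrem_max s / 2 else 0.
apply: le_trans (pmass_abs_chernoff cw coin_weight_ge0 encoder_noise v s t s0 _ _) _.
- by move=> ij; apply: encoder_noise_mgf.
- by move=> ij; rewrite /v -(expRrem_maxN s); apply: encoder_noise_mgf.
rewrite ler_pM2l // ler_expR lerD2r sum_pair.
rewrite /v /=.
apply: le_trans (_ : _ <= \sum_(i < n) expRrem_max s / 2) _.
  by apply: ler_sum => i _; apply: sum_if_succ_eq_le; rewrite divr_ge0 ?expRrem_max_ge0.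
have -> : n%:R / 2 * expRrem_max s = n%:R * (expRrem_max s / 2) by ring.
by rewrite sumr_const card_ord mulr_natl.
Qed.

Lemma randomizer_noise_chernoff s t : 0 <= s ->
  pmass cw [pred w : coins n r | t <= `|\sum_ij randomizer_noise ij (w ij)|]
  <= 2 * expR (r%:R * lam / 2 * expRrem_max s - s * t).
Proof.
move=> s0; apply: le_trans (pmass_abs_chernoff cw coin_weight_ge0 randomizer_noise
  (fun=> rho / 2 * expRrem_max s) s t s0 _ _) _.
- by move=> ij; apply: randomizer_noise_mgf.
- by move=> ij; rewrite -(expRrem_maxN s); apply: randomizer_noise_mgf.
have n0 : n%:R != 0 :> R by rewrite pnatr_eq0 -lt0n n_gt0.
have -> : \sum_(ij : idx n r) rho / 2 * expRrem_max s = r%:R * lam / 2 * expRrem_max s.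
  by rewrite sumr_const card_prod !card_ord -[_ *+ (n * r)]mulr_natl natrM; field.
by [].
Qed.

Lemma encoder_error_tail L : 0 < L -> L <= 9 / 16 * n%:R ->
  pmass cw [pred w : coins n r | Num.sqrt 2 / r%:R * Num.sqrt (n%:R * L) * r%:R
                                 <= `|\sum_ij encoder_noise ij (w ij)|]
  < 2 * expR (- L).
Proof.
move=> L0 Ln; have r0 : r%:R != 0 :> R by rewrite pnatr_eq0 -lt0n.
apply: (subgaussian_tail _ _ _ _ (fun s => encoder_noise_chernoff s _)) => //.
- by rewrite ltr0n n_gt0.
- rewrite mulrAC divfK // exprMn !sqr_sqrtr ?mulr_ge0 ?ler0n ?ltW //; ring.
Qed.

Lemma randomizer_error_tail L : 0 < L -> L <= 9 / 16 * lam ->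
  pmass cw [pred w : coins n r |
              n%:R / (n%:R - lam) * Num.sqrt (2 * (lam / r%:R) * L) * (r%:R * (1 - rho))
              <= `|\sum_ij randomizer_noise ij (w ij)|]
  < 2 * expR (- L).
Proof.
move=> L0 Llam; have r_pos : 0 < r%:R :> R by rewrite ltr0n.
have n_pos : 0 < n%:R :> R by rewrite ltr0n n_gt0.
have -> : n%:R / (n%:R - lam) * Num.sqrt (2 * (lam / r%:R) * L) * (r%:R * (1 - rho))
          = r%:R * Num.sqrt (2 * (lam / r%:R) * L).
  by field; rewrite subr_eq0 !gt_eqF.
have B0 : 0 <= 2 * (lam / r%:R) * L by apply/ltW; rewrite !mulr_gt0 ?invr_gt0.
apply: (subgaussian_tail _ _ _ _ (fun s => randomizer_noise_chernoff s _)) => //.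
- by rewrite mulr_gt0.
- have : lam <= r%:R * lam by rewrite ler_peMl ?ler1n // ltW.
  lra.
- by rewrite exprMn sqr_sqrtr //; field; rewrite gt_eqF.
Qed.

End Protocol.

Theorem theorem5p5 (R : realType) (n r : nat) (beta lam : R) (x : 'I_n -> R) :
  0 < beta ->
  0 < lam -> lam < n%:R ->
  16 / 9 * ln (2 / beta) <= lam ->
  (0 < r)%N ->
  (forall i, 0 <= x i <= 1) ->
  prob r lam x
    (fun out => Num.sqrt 2 / r%:R * Num.sqrt (n%:R * ln (2 / beta))
                + n%:R / (n%:R - lam) * Num.sqrt (2 * (lam / r%:R) * ln (2 / beta))
                <= `|out - \sum_(i < n) x i|)
  < 2 * beta.
Proof.
move=> beta0 lam0 lam_n hL r0 x01.
have cw0 : forall (ij : idx n r) t, 0 <= coin_weight lam x ij t.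
  exact: coin_weight_ge0.
rewrite prob_coins; set L := ln (2 / beta) in hL *.
have [beta_ge2|beta_lt2] := lerP (2 / beta) 1.
  apply: le_lt_trans (pmass_le1 _ cw0 _ (sum_coin_weight1 _ _ _ _)) _.
  by move: beta_ge2; rewrite ler_pdivrMr // mul1r; lra.
have half_beta : 2 * expR (- L) = beta.
  by rewrite expRN lnK ?posrE ?divr_gt0 // invf_div mulrCA divff ?mulr1.
have L0 : 0 < L by rewrite ln_gt0.
have -> : 2 * beta = 2 * expR (- L) + 2 * expR (- L) by rewrite half_beta; ring.
clearbody L; apply: le_lt_trans (pmass_le_union _ cw0 _ _ _ _) _.
  by move=> w; apply: error_split.
by apply: ltrD; [apply: encoder_error_tail | apply: randomizer_error_tail] => //; lra.
Qed.
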